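(* Let $\mathfrak{g}$ be a filiform Lie algebra of odd dimension $n\ge3$ over a field $K$ of characteristic zero, and fix an adapted basis $\{e_1,\dots,e_n\}$, with $\mathfrak{g}_i=\langle e_i,\dots,e_n\rangle$. Then $\chi(\mathfrak{g})=1$ if and only if $[\mathfrak{g}_i,\mathfrak{g}_{n-i}]\neq0$ for all $i=1,\dots,n-1$.
   Context: A filiform Lie algebra of dimension $n$ is a nilpotent Lie algebra with $\dim\mathfrak{g}^k=n-k$ for $2\le k\le n$ (lower central series $\mathfrak{g}^1=\mathfrak{g}$, $\mathfrak{g}^{k+1}=[\mathfrak{g},\mathfrak{g}^k]$). An adapted basis is a basis $\{e_1,\dots,e_n\}$ with $[e_1,e_i]=e_{i+1}$ ($2\le i\le n-1$), $[e_1,e_n]=0$, $[e_2,e_3]\in\langle e_5,\dots,e_n\rangle$; such a basis exists, and (Vergne) it then satisfies $[e_i,e_j]\in\langle e_{i+j},\dots,e_n\rangle$ if $i+j\le n$, $[e_i,e_j]=0$ if $i+j>n+1$, and $[e_i,e_{n+1-i}]=(-1)^i\alpha e_n$ for some $\alpha\in K$ with $\alpha=0$ when $n$ is odd. For $\ell\in\mathfrak{g}^*$, $\mathfrak{g}(\ell)=\{y\in\mathfrak{g}\mid\ell([x,y])=0\ \forall x\in\mathfrak{g}\}$ and $\chi(\mathfrak{g})=\min_{\ell\in\mathfrak{g}^*}\dim\mathfrak{g}(\ell)$. *)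

From HB Require Import structures.
From mathcomp Require Import all_boot all_order all_algebra.
Set Implicit Arguments. Unset Strict Implicit. Unset Printing Implicit Defensive.
Import Order.TTheory GRing.Theory Num.Theory.
Local Open Scope ring_scope.

(* A Lie algebra of dimension n over K is modelled as K^n = 'rV[K]_n with its
   standard basis e_0, ..., e_(n-1) (0-indexed: e_k is the paper's e_(k+1)),
   and a bracket given by structure constants c i j = [e_i, e_j],
   extended bilinearly. *)

Section Defs.
Variables (K : fieldType) (n : nat).

Definition bvec (i : 'I_n) : 'rV[K]_n := delta_mx 0 i.

Definition br (c : 'I_n -> 'I_n -> 'rV[K]_n) (x y : 'rV[K]_n) : 'rV[K]_n :=
  \sum_(i < n) \sum_(j < n) (x 0 i * y 0 j) *: c i j.

Definition is_lie (c : 'I_n -> 'I_n -> 'rV[K]_n) : Prop :=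
  (forall x, br c x x = 0) /\
  (forall x y z, br c x (br c y z) + br c y (br c z x) + br c z (br c x y) = 0).

(* [g, V] : the subspace spanned by the brackets [x, v], x in g, v in V
   (by bilinearity it is spanned by brackets of basis vectors). *)
Definition brg (c : 'I_n -> 'I_n -> 'rV[K]_n) (V : {vspace 'rV[K]_n})
  : {vspace 'rV[K]_n} :=
  <<[seq br c (bvec i) v | i <- enum 'I_n, v <- (vbasis V : seq _)]>>%VS.

Fixpoint lcs (c : 'I_n -> 'I_n -> 'rV[K]_n) (k : nat) : {vspace 'rV[K]_n} :=
  match k with
  | 0 | 1 => fullv
  | k'.+1 => brg c (lcs c k')
  end.

Definition nilpotent_lie c : Prop := exists k, lcs c k = 0%VS.

Definition filiform c : Prop :=
  is_lie c /\ nilpotent_lie c /\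
  (forall k, (2 <= k <= n)%N -> \dim (lcs c k) = (n - k)%N).

(* The standard basis is adapted (paper's indices shifted by one):
   [e_1,e_i] = e_(i+1) for 2 <= i <= n-1, [e_1,e_n] = 0,
   [e_2,e_3] in <e_5, ..., e_n>. *)
Definition adapted c : Prop :=
  forall i0 : 'I_n, val i0 = 0%N ->
  (forall (i j : 'I_n), (1 <= i)%N -> val j = i.+1 -> c i0 i = bvec j)
  /\ (forall i : 'I_n, val i = n.-1 -> c i0 i = 0)
  /\ (forall i j : 'I_n, val i = 1%N -> val j = 2%N ->
        forall k : 'I_n, (k < 4)%N -> (c i j) 0 k = 0).

(* g_i = <e_i, ..., e_n> (paper's 1-based i): vectors whose coordinates on
   e_1, ..., e_(i-1) vanish. *)
Definition gsub (i : nat) (x : 'rV[K]_n) : Prop :=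
  forall k : 'I_n, (k.+1 < i)%N -> x 0 k = 0.

(* A linear functional l in g^* is represented by a column vector:
   l(v) = (v *m l) 0 0. *)
Definition app (l : 'cV[K]_n) (v : 'rV[K]_n) : K := (v *m l) 0 0.

(* g(l) = { y | l([x,y]) = 0 for all x }.  Its elements are exactly the row
   vectors y with y *m stab_mx c l = 0, since (y *m stab_mx c l) 0 i = l([e_i,y]);
   g(l) is therefore the row space of kermx (stab_mx c l). *)
Definition stab_mx c (l : 'cV[K]_n) : 'M[K]_n :=
  \matrix_(j < n, i < n) app l (br c (bvec i) (bvec j)).

Definition in_stab c (l : 'cV[K]_n) (y : 'rV[K]_n) : Prop :=
  forall x, app l (br c x y) = 0.

Definition dim_stab c (l : 'cV[K]_n) : nat := \rank (kermx (stab_mx c l)).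

Definition chi_eq c (m : nat) : Prop :=
  (exists l, dim_stab c l = m) /\ (forall l, (m <= dim_stab c l)%N).
End Defs.

From HB Require Import structures.
From mathcomp Require Import all_boot all_order all_algebra.
From mathcomp Require Import zify.
Import GRing.Theory.
Set Implicit Arguments. Unset Strict Implicit.
Local Open Scope ring_scope.

(* The form B_l(x, y) = l([x, y]) has radical g(l). If [g_i, g_(n-i)] = 0,
   B_l vanishes on g_i x g_(n-i), of codimensions i - 1 and n - i - 1, so
   rank B_l <= n - 2 and dim g(l) >= 2.

   Conversely, Vergne's refinement [e_i, e_j] in g_(i+j) of the grading
   [e_i, e_j] in g_(i+j-1) is proved by induction on s = i + j. The Jacobi
   identity with e_1 makes the critical coefficients of the [e_a, e_(s-a)]
   alternate in sign, so by antisymmetry they vanish for even s. For odd s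
   they are +-x, the critical coefficients at level s + 1 are then integer
   multiples of x, and one more Jacobi identity gives k x^2 = 0 with k >= 1:
   this needs characteristic zero, and level s + 1 to lie inside g, which is
   where n odd is used. Given the grading, [g_i, g_(n-i)] is spanned by the
   e_n-coefficient of [e_i, e_(n-i)], so for l = e_n^* the matrix of B_l is
   antitriangular with nonzero antidiagonal and g(l) = <e_n>.

   Indices below are 0-based: bvec k is e_(k+1) and supp_from r v means
   v \in g_(r+1). *)

Lemma telescope_const (V : zmodType) (f : nat -> V) (d : V) lo hi :
  (lo <= hi)%N -> (forall k, (lo <= k < hi)%N -> f k.+1 - f k = d) ->
  f hi = f lo + d *+ (hi - lo).
Proof.
move=> le_lo_hi df; rewrite -sumr_const_nat.
by rewrite (telescope_sumr_eq _ _ le_lo_hi (fun k hk => esym (df k hk))) addrC subrK.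
Qed.

Section Filiform.
Variables (K : fieldType) (n : nat) (c : 'I_n -> 'I_n -> 'rV[K]_n).

Lemma bvecE (i k : 'I_n) : bvec K i 0 k = (k == i)%:R.
Proof. by rewrite mxE eqxx. Qed.

Lemma br_bvecl (i : 'I_n) y : br c (bvec K i) y = \sum_j y 0 j *: c i j.
Proof.
rewrite /br (bigD1 i) //= [X in _ + X]big1 ?addr0.
  by apply: eq_bigr => j _; rewrite bvecE eqxx mul1r.
by move=> k /negbTE nki; apply: big1 => j _; rewrite bvecE nki mul0r scale0r.
Qed.

Lemma br_bvec (i j : 'I_n) : br c (bvec K i) (bvec K j) = c i j.
Proof.
rewrite br_bvecl (bigD1 j) //= [X in _ + X]big1 ?addr0.
  by rewrite bvecE eqxx scale1r.
by move=> k /negbTE nkj; rewrite bvecE nkj scale0r.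
Qed.

Lemma brDl x x' y : br c (x + x') y = br c x y + br c x' y.
Proof.
rewrite /br -big_split; apply: eq_bigr => i _; rewrite -big_split.
by apply: eq_bigr => j _; rewrite mxE mulrDl scalerDl.
Qed.

Lemma brDr x y y' : br c x (y + y') = br c x y + br c x y'.
Proof.
rewrite /br -big_split; apply: eq_bigr => i _; rewrite -big_split.
by apply: eq_bigr => j _; rewrite mxE mulrDr scalerDl.
Qed.

Lemma brZl a x y : br c (a *: x) y = a *: br c x y.
Proof.
rewrite /br scaler_sumr; apply: eq_bigr => i _; rewrite scaler_sumr.
by apply: eq_bigr => j _; rewrite mxE scalerA mulrA.
Qed.

Lemma brZr a x y : br c x (a *: y) = a *: br c x y.
Proof.
rewrite /br scaler_sumr; apply: eq_bigr => i _; rewrite scaler_sumr.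
by apply: eq_bigr => j _; rewrite mxE scalerA mulrCA.
Qed.

Lemma br0r x : br c x 0 = 0.
Proof.
by rewrite /br big1 // => i _; rewrite big1 // => j _; rewrite mxE mulr0 scale0r.
Qed.

Lemma brNr x y : br c x (- y) = - br c x y.
Proof. by rewrite -scaleN1r brZr scaleN1r. Qed.

Lemma br0l y : br c 0 y = 0.
Proof.
by rewrite /br big1 // => i _; rewrite big1 // => j _; rewrite mxE mul0r scale0r.
Qed.

Lemma br_suml I (r : seq I) (P : pred I) F y :
  br c (\sum_(i <- r | P i) F i) y = \sum_(i <- r | P i) br c (F i) y.
Proof. by elim/big_rec2: _ => [|i x1 x2 _ <-]; rewrite ?br0l ?brDl. Qed.

Lemma brEl x y : br c x y = \sum_i x 0 i *: br c (bvec K i) y.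
Proof. by rewrite {1}[x]row_sum_delta br_suml; apply: eq_bigr => i _; rewrite brZl. Qed.

Lemma br_sumr I (r : seq I) (P : pred I) F x :
  br c x (\sum_(i <- r | P i) F i) = \sum_(i <- r | P i) br c x (F i).
Proof. by elim/big_rec2: _ => [|i y1 y2 _ <-]; rewrite ?br0r ?brDr. Qed.

Lemma brg_mem (V : {vspace 'rV[K]_n}) x w : w \in V -> br c x w \in brg c V.
Proof.
move=> /coord_vbasis ->; rewrite brEl; apply: memv_suml => i _.
apply: memvZ; rewrite br_sumr; apply: memv_suml => j _.
rewrite brZr; apply: memvZ; apply: memv_span.
apply: allpairs_f; first by rewrite mem_enum.
by apply: mem_nth; rewrite size_tuple.
Qed.

Lemma lcsS k : (0 < k)%N -> lcs c k.+1 = brg c (lcs c k).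
Proof. by case: k => [|[|k]]. Qed.

Definition supp_from (r : nat) (v : 'rV[K]_n) : Prop :=
  forall t : 'I_n, (t < r)%N -> v 0 t = 0.

Lemma gsub_supp_from i v : gsub i v <-> supp_from i.-1 v.
Proof. by split=> h t ht; apply: h; lia. Qed.

Lemma supp_from0 r : supp_from r 0.
Proof. by move=> t _; rewrite mxE. Qed.

Lemma supp_fromD r u v : supp_from r u -> supp_from r v -> supp_from r (u + v).
Proof. by move=> hu hv t ht; rewrite mxE hu // hv // addr0. Qed.

Lemma supp_fromZ r a v : supp_from r v -> supp_from r (a *: v).
Proof. by move=> hv t ht; rewrite mxE hv // mulr0. Qed.

Lemma supp_fromN r v : supp_from r v -> supp_from r (- v).
Proof. by move=> hv t ht; rewrite mxE hv // oppr0. Qed.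

Lemma supp_fromB r u v : supp_from r u -> supp_from r v -> supp_from r (u - v).
Proof. by move=> hu hv; apply: supp_fromD => //; apply: supp_fromN. Qed.

Lemma supp_from_sum I (s : seq I) (P : pred I) F r :
  (forall i, P i -> supp_from r (F i)) -> supp_from r (\sum_(i <- s | P i) F i).
Proof.
move=> hF; elim/big_rec: _ => [|i y Pi hy]; first exact: supp_from0.
by apply: supp_fromD => //; apply: hF.
Qed.

Lemma supp_fromW r r' v : (r' <= r)%N -> supp_from r v -> supp_from r' v.
Proof. by move=> le h t ht; apply: h; apply: leq_trans le. Qed.

Lemma supp_from_eq0 r v : (n <= r)%N -> supp_from r v -> v = 0.
Proof. by move=> le h; apply/rowP => t; rewrite mxE h //; apply: leq_trans le. Qed.

Lemma supp_from_bvec r (j : 'I_n) : (r <= j)%N -> supp_from r (bvec K j).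
Proof. by move=> le t ht; rewrite bvecE; case: eqP => // tj; move: ht; rewrite tj; lia. Qed.

Definition tail_span (k : nat) : {vspace 'rV[K]_n} :=
  <<[seq bvec K j | j <- [seq j : 'I_n <- enum 'I_n | (k <= j)%N]]>>%VS.

Definition head_span (k : nat) : {vspace 'rV[K]_n} :=
  <<[seq bvec K j | j <- [seq j : 'I_n <- enum 'I_n | (j < k)%N]]>>%VS.

Lemma mem_tail_span k v : supp_from k v -> v \in tail_span k.
Proof.
move=> hv; rewrite [v]row_sum_delta; apply: memv_suml => j _.
case: (ltnP j k) => jk; first by rewrite hv // scale0r mem0v.
by apply/memvZ/memv_span/map_f; rewrite mem_filter jk mem_enum.
Qed.

Lemma supp_from_tail_span k v : v \in tail_span k -> supp_from k v.
Proof.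
rewrite /tail_span; set s := map _ _.
move=> /(@coord_span _ _ _ (in_tuple s)) ->.
apply: supp_from_sum => i _; apply: supp_fromZ.
have : (in_tuple s)`_i \in s by apply: mem_nth; exact: ltn_ord.
by case/mapP => j; rewrite mem_filter => /andP[kj _] ->; apply: supp_from_bvec.
Qed.

Lemma dim_head_span k : (\dim (head_span k) <= k)%N.
Proof.
apply: leq_trans (dim_span _) _; rewrite size_map.
set s := [seq j : 'I_n <- enum 'I_n | _].
rewrite -(size_map val s) -(size_iota 0 k); apply: uniq_leq_size.
  by rewrite (map_inj_uniq val_inj) filter_uniq // enum_uniq.
by move=> x /mapP [j]; rewrite mem_filter => /andP[jk _] ->; rewrite mem_iota.
Qed.

Lemma head_tail_span_full k : (fullv <= head_span k + tail_span k)%VS.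
Proof.
apply/subvP => v _; rewrite [v]row_sum_delta; apply: memv_suml => j _.
apply: memvZ; case: (ltnP j k) => jk.
  by apply/(subvP (addvSl _ _))/memv_span/map_f; rewrite mem_filter jk mem_enum.
by apply/(subvP (addvSr _ _))/memv_span/map_f; rewrite mem_filter jk mem_enum.
Qed.

Lemma dim_tail_span k : (n - k <= \dim (tail_span k))%N.
Proof.
rewrite leq_subLR; have := dimvS (head_tail_span_full k).
rewrite dimvf /dim /= mul1n => /leq_trans; apply.
by apply: leq_trans (dimv_add_leqif _ _) _; rewrite leq_add2r dim_head_span.
Qed.

Section Lie.
Hypothesis c_lie : is_lie c.

Lemma br_alt x : br c x x = 0.
Proof. by case: c_lie. Qed.

Lemma br_anti x y : br c y x = - br c x y.
Proof.
have := br_alt (x + y); rewrite !brDl !brDr !br_alt add0r addr0.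
by move/eqP; rewrite addrC addr_eq0 => /eqP.
Qed.

Lemma c_alt i : c i i = 0.
Proof. by rewrite -br_bvec br_alt. Qed.

Lemma c_anti i j : c j i = - c i j.
Proof. by rewrite -!br_bvec br_anti. Qed.

Lemma br_jacobi x y z : br c (br c x y) z = br c x (br c y z) - br c y (br c x z).
Proof.
case: c_lie => _ /(_ x y z).
rewrite (br_anti x z) brNr => J.
by rewrite (br_anti z) -[LHS]add0r -J addrK.
Qed.

Section Adapted.
Hypotheses (c_adapted : adapted c) (n_ge3 : (3 <= n)%N).

Let n_gt0 : (0 < n)%N. Proof. exact: leq_trans n_ge3. Qed.
Let e0 : 'I_n := Ordinal n_gt0.

Lemma c_e0_succ (a b : 'I_n) : (0 < a)%N -> (b : nat) = a.+1 -> c e0 a = bvec K b.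
Proof. by have [succ _] := @c_adapted e0 erefl; apply: succ. Qed.

Lemma c_e0E (j t : 'I_n) : c e0 j 0 t = ((0 < j)%N && (t == j.+1 :> nat))%:R.
Proof.
have [_ [e0_last _]] := @c_adapted e0 erefl.
case: (posnP j) => [j0|j_gt0].
  by rewrite (_ : j = e0) ?c_alt ?mxE //; apply: val_inj.
case: (ltnP j.+1 n) => jl.
  by rewrite (@c_e0_succ j (Ordinal jl)) // bvecE.
rewrite e0_last ?mxE /=; last by have := ltn_ord j; lia.
by case: eqP => // tj; have := ltn_ord t; lia.
Qed.

Lemma br_e0_lt2 v (t : 'I_n) : (t < 2)%N -> br c (bvec K e0) v 0 t = 0.
Proof.
move=> t_lt2; rewrite br_bvecl summxE big1 // => j _.
rewrite mxE c_e0E; case: eqP; rewrite ?andbF ?mulr0 //.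
by move=> tj; rewrite andbT; case: (posnP j) => [|j_gt0]; rewrite ?mulr0 //; lia.
Qed.

Lemma br_e0_shift v (t k : 'I_n) : (t : nat) = k.+1 -> (0 < k)%N ->
  br c (bvec K e0) v 0 t = v 0 k.
Proof.
move=> tk k_gt0; rewrite br_bvecl summxE (bigD1 k) //= [X in _ + X]big1 ?addr0.
  by rewrite mxE c_e0E k_gt0 tk eqxx mulr1.
move=> j jk; rewrite mxE c_e0E tk; case: eqP; last by rewrite andbF mulr0.
by move=> -[/val_inj ekj]; move: jk; rewrite ekj eqxx.
Qed.

Lemma supp_from_br_e0 r v : supp_from r v -> supp_from r.+1 (br c (bvec K e0) v).
Proof.
move=> hv t ht; case: (ltnP t 2) => t2; first exact: br_e0_lt2.
have tl : (t.-1 < n)%N by have := ltn_ord t; lia.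
rewrite (@br_e0_shift v t (Ordinal tl)) /=; try lia.
by apply: hv => /=; lia.
Qed.

Lemma bvec_lcs k (j : 'I_n) : (2 <= k <= j)%N -> bvec K j \in lcs c k.
Proof.
elim: k j => [|k IH] j // /andP[k2 kj].
have jl : (j.-1 < n)%N by have := ltn_ord j; lia.
rewrite -(@c_e0_succ (Ordinal jl) j); try (rewrite /=; lia).
rewrite -br_bvec lcsS; last by lia.
apply: brg_mem; case: (ltnP k 2) => k2'; first by rewrite (_ : k = 1%N) ?memvf; lia.
by apply: IH => /=; lia.
Qed.

Section LowerCentralSeries.
Hypothesis lcs_dim : forall k, (2 <= k <= n)%N -> \dim (lcs c k) = (n - k)%N.

Lemma lcs_tail_span k : (2 <= k <= n)%N -> lcs c k = tail_span k.
Proof.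
move=> /andP[k2 kn].
have sub : (tail_span k <= lcs c k)%VS.
  apply/span_subvP => v /mapP [j]; rewrite mem_filter => /andP[kj _] ->.
  by apply: bvec_lcs; rewrite k2.
apply/eqP; rewrite eq_sym -(dimv_leqif_eq sub).2 eqn_leq (dimv_leqif_eq sub).1.
by rewrite lcs_dim ?k2 ?dim_tail_span.
Qed.

Lemma supp_from_br x r v : (0 < r)%N -> supp_from r v -> supp_from r.+1 (br c x v).
Proof.
move=> r_gt0 hv; case: (ltnP r n) => rn; last first.
  by rewrite (supp_from_eq0 rn hv) br0r; apply: supp_from0.
apply: supp_from_tail_span; rewrite -lcs_tail_span; last by lia.
rewrite lcsS //; apply: brg_mem.
case: (ltnP r 2) => r2; first by rewrite (_ : r = 1%N) ?memvf; lia.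
by rewrite lcs_tail_span; [apply: mem_tail_span | lia].
Qed.

Lemma supp_from_br_bvec (i : 'I_n) r v : (0 < i)%N -> (0 < r)%N -> supp_from r v ->
  supp_from (i + r) (br c (bvec K i) v).
Proof.
move=> i_gt0; have [k ik] : exists k, (i : nat) = k.+1 by exists i.-1; lia.
clear i_gt0; elim: k i ik r v => [|k IH] i ik r v r_gt0 hv.
  by rewrite ik add1n; apply: supp_from_br.
have kl : (k.+1 < n)%N by have := ltn_ord i; lia.
rewrite -(@c_e0_succ (Ordinal kl) i) // -br_bvec br_jacobi //.
apply: supp_fromB.
  rewrite (_ : (i + r = (Ordinal kl + r).+1)%N); last by rewrite /=; lia.
  by apply: supp_from_br_e0; apply: IH.
rewrite (_ : (i + r = Ordinal kl + r.+1)%N); last by rewrite /=; lia.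
by apply: IH => //; apply: supp_from_br_e0.
Qed.

Lemma supp_from_c (i j : 'I_n) : (0 < i)%N -> (0 < j)%N -> supp_from (i + j) (c i j).
Proof. by move=> i_gt0 j_gt0; rewrite -br_bvec; apply/supp_from_br_bvec/supp_from_bvec. Qed.

Lemma br_bvec_coef (i k t : 'I_n) v : (0 < i)%N -> (0 < k)%N -> supp_from k v ->
  (t : nat) = (i + k)%N -> br c (bvec K i) v 0 t = v 0 k * c i k 0 t.
Proof.
move=> i_gt0 k_gt0 hv tik; rewrite br_bvecl summxE (bigD1 k) //= mxE.
rewrite [X in _ + X]big1 ?addr0 // => j jk; rewrite mxE.
case: (ltnP j k) => jk'; first by rewrite hv // mul0r.
rewrite (@supp_from_c i j) ?mulr0 //; first lia.
by rewrite tik ltn_add2l ltn_neqAle jk' andbT eq_sym.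
Qed.

Definition vergne_at m := forall i j : 'I_n, (0 < i)%N -> (0 < j)%N -> (i + j)%N = m ->
  supp_from m.+1 (c i j).

Lemma vergne_at_ge m : (n <= m)%N -> vergne_at m.
Proof.
move=> nm i j i_gt0 j_gt0 ijm.
rewrite (@supp_from_eq0 m (c i j) nm); first exact: supp_from0.
by rewrite -ijm; apply: supp_from_c.
Qed.

Lemma vergne_at_le3 m : (m <= 3)%N -> vergne_at m.
Proof.
move=> m3 i j i_gt0 j_gt0 ijm.
have [_ [_ c12]] := @c_adapted e0 erefl.
case: (ltnP i 2) => i2; case: (ltnP j 2) => j2; try lia.
- by rewrite (_ : i = j) ?c_alt; [apply: supp_from0 | apply: val_inj => /=; lia].
- by move=> t tm; apply: c12 => /=; lia.
- by rewrite c_anti; apply: supp_fromN => t tm; apply: c12 => /=; lia.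
Qed.

Definition ord_of (a : nat) : 'I_n := insubd e0 a.

Lemma ord_ofE a : (a < n)%N -> ord_of a = a :> nat.
Proof. by rewrite val_insubd => ->. Qed.

Lemma ord_of_ord (i : 'I_n) : ord_of i = i.
Proof. by apply: val_inj => /=; rewrite ord_ofE. Qed.

Lemma br_e0_c (a b : 'I_n) : (0 < a)%N -> (0 < b)%N -> (a.+1 < n)%N -> (b.+1 < n)%N ->
  br c (bvec K e0) (c a b) = c (ord_of a.+1) b + c a (ord_of b.+1).
Proof.
move=> a_gt0 b_gt0 an bn.
rewrite -[c a b]br_bvec -[LHS](subrK (br c (bvec K a) (br c (bvec K e0) (bvec K b)))).
rewrite -br_jacobi // !br_bvec (@c_e0_succ a (ord_of a.+1)) ?ord_ofE //.
by rewrite (@c_e0_succ b (ord_of b.+1)) ?ord_ofE // !br_bvec.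
Qed.

Section Step.
Variable m : nat.
Hypotheses (m_ge4 : (4 <= m)%N) (m_lt_n : (m < n)%N).
Hypothesis vergne_pred : vergne_at m.-1.

Let tm : 'I_n := Ordinal m_lt_n.
Let diag_coef a := c (ord_of a) (ord_of (m - a)) 0 tm.

Lemma diag_coef_rec a : (0 < a)%N -> (a < m - 1)%N -> diag_coef a + diag_coef a.+1 = 0.
Proof.
move=> a_gt0 am.
have hA : ord_of a = a :> nat by rewrite ord_ofE //; lia.
have hB : ord_of (m - 1 - a) = (m - 1 - a)%N :> nat by rewrite ord_ofE //; lia.
have supp : supp_from m (c (ord_of a) (ord_of (m - 1 - a))).
  have := @vergne_pred (ord_of a) (ord_of (m - 1 - a)).
  by rewrite hA hB (ltn_predK m_ge4); apply; lia.
have := supp_from_br_e0 supp (ltnSn m : (tm < m.+1)%N).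
rewrite br_e0_c ?hA ?hB; try lia.
rewrite mxE addrC /diag_coef (_ : ord_of (m - a.+1) = ord_of (m - 1 - a)).
  rewrite (_ : ord_of (m - 1 - a).+1 = ord_of (m - a)) //.
  by apply: val_inj => /=; rewrite !ord_ofE; lia.
by congr ord_of; lia.
Qed.

Lemma diag_coef_sign a : (0 < a < m)%N -> (-1) ^+ a * diag_coef a = - diag_coef 1.
Proof.
move=> /andP[a_gt0 am].
rewrite (@telescope_const _ (fun k => (-1) ^+ k * diag_coef k) 0 1 a) // ?mul0rn ?addr0.
  by rewrite expr1 mulN1r.
move=> k /andP[k_gt0 ka].
by rewrite exprS mulN1r mulNr -opprD -mulrDr addrC diag_coef_rec ?mulr0 ?oppr0 //; lia.
Qed.

Lemma vergne_at_of_diag_coef : diag_coef 1 = 0 -> vergne_at m.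
Proof.
move=> x1 i j i_gt0 j_gt0 ijm t tm1.
case: (ltnP t m) => tm'; first by apply: supp_from_c; lia.
have -> : t = tm by apply: val_inj => /=; lia.
have := @diag_coef_sign i; rewrite x1 oppr0 /diag_coef ord_of_ord.
rewrite (_ : ord_of (m - i) = j); last by apply: val_inj => /=; rewrite ord_ofE; lia.
move=> h; apply/eqP; have /eqP := h ltac:(lia).
by rewrite mulf_eq0 expf_eq0 oppr_eq0 oner_eq0 andbF.
Qed.

Lemma vergne_at_even : ~~ odd m -> vergne_at m.
Proof.
move=> m_even; apply: vergne_at_of_diag_coef.
have mp : m = (m./2 + m./2)%N by rewrite addnn -[LHS]odd_double_half (negbTE m_even).
have mh : (m - m./2 = m./2)%N by rewrite {1}mp addnK.
have := @diag_coef_sign m./2 ltac:(lia).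
by rewrite /diag_coef mh c_alt // mxE mulr0 => /esym /eqP; rewrite oppr_eq0 => /eqP.
Qed.

Section Odd.
Hypotheses (char0 : [pchar K] =i pred0) (vergne3 : vergne_at 3) (m1_lt_n : (m.+1 < n)%N).

Let tm1 : 'I_n := Ordinal m1_lt_n.
Let next_coef a := c (ord_of a) (ord_of (m.+1 - a)) 0 tm1.

Lemma next_coef_rec a : (0 < a)%N -> (a < m)%N ->
  next_coef a + next_coef a.+1 = diag_coef a.
Proof.
move=> a_gt0 am.
have hA : ord_of a = a :> nat by rewrite ord_ofE //; lia.
have hB : ord_of (m - a) = (m - a)%N :> nat by rewrite ord_ofE //; lia.
rewrite /diag_coef -(@br_e0_shift (c (ord_of a) (ord_of (m - a))) tm1 tm) //=; last by lia.
rewrite br_e0_c ?hA ?hB; try lia.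
rewrite mxE addrC /next_coef subSS.
by rewrite (_ : ord_of (m - a).+1 = ord_of (m.+1 - a)) //; congr ord_of; lia.
Qed.

Lemma next_coef1 p : m.+1 = (p + p)%N -> next_coef 1 = diag_coef 1 *+ (p - 1).
Proof.
move=> mp.
have yp : next_coef p = 0 by rewrite /next_coef mp addnK c_alt // mxE.
have step k : (1 <= k < p)%N ->
    (-1) ^+ k.+1 * next_coef k.+1 - (-1) ^+ k * next_coef k = diag_coef 1.
  move=> /andP[k_gt0 kp].
  rewrite exprS mulN1r mulNr -opprD -mulrDr addrC next_coef_rec; try lia.
  by rewrite diag_coef_sign ?opprK //; lia.
have := @telescope_const _ _ _ 1 p ltac:(lia) step.
by rewrite yp mulr0 expr1 mulN1r => /eqP; rewrite eq_sym addrC subr_eq0 => /eqP.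
Qed.

(* The Jacobi identity for bvec 1, bvec 2, bvec (m - 2), read at coordinate
   m + 1: by the grading only [bvec 1, [bvec 2, bvec (m - 2)]] contributes. *)
Lemma diag_next_coef_jacobi : diag_coef 2 * next_coef 1 = 0.
Proof.
have h1 : ord_of 1 = 1%N :> nat by rewrite ord_ofE; lia.
have h2 : ord_of 2 = 2%N :> nat by rewrite ord_ofE; lia.
have hd : ord_of (m - 2) = (m - 2)%N :> nat by rewrite ord_ofE; lia.
have := congr1 (fun v : 'rV[K]_n => v 0 tm1)
  (br_jacobi (bvec K (ord_of 1)) (bvec K (ord_of 2)) (bvec K (ord_of (m - 2)))).
rewrite !br_bvec (br_anti (bvec K (ord_of (m - 2)))) /= !mxE.
have -> : br c (bvec K (ord_of (m - 2))) (c (ord_of 1) (ord_of 2)) 0 tm1 = 0.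
  have supp4 : supp_from 4 (c (ord_of 1) (ord_of 2)) by apply: vergne3; rewrite ?h1 ?h2.
  by apply: (supp_from_br_bvec _ _ supp4); rewrite /= ?hd; lia.
have -> : br c (bvec K (ord_of 2)) (c (ord_of 1) (ord_of (m - 2))) 0 tm1 = 0.
  have suppm : supp_from m (c (ord_of 1) (ord_of (m - 2))).
    have := @vergne_pred (ord_of 1) (ord_of (m - 2)).
    by rewrite h1 hd (ltn_predK m_ge4); apply; lia.
  by apply: (supp_from_br_bvec _ _ suppm); rewrite /= ?h2; lia.
rewrite (@br_bvec_coef _ tm) ?h1 ?h2 ?hd //=; try lia; last first.
  have := @supp_from_c (ord_of 2) (ord_of (m - 2)).
  by rewrite h2 hd subnKC; [apply | ]; lia.
rewrite oppr0 addr0 /next_coef (_ : ord_of (m.+1 - 1) = tm) => [<- //|].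
by apply: val_inj => /=; rewrite ord_ofE; lia.
Qed.

Lemma vergne_at_odd : odd m -> vergne_at m.
Proof.
move=> m_odd; apply: vergne_at_of_diag_coef.
have [p mp] : exists p, m.+1 = (p + p)%N.
  by exists m.+1./2; rewrite addnn -[LHS]odd_double_half /= m_odd.
have x2 : diag_coef 2 = - diag_coef 1.
  by rewrite -(@diag_coef_sign 2) ?expr2 ?mulrNN ?mul1r //; lia.
have := diag_next_coef_jacobi; rewrite (next_coef1 mp) x2 mulNr mulrnAr -mulr_natr.
have p1 : (p - 1 == 0)%N = false by apply/negbTE/eqP; lia.
move/eqP; rewrite oppr_eq0 mulf_eq0 mulf_eq0 orbb (proj1 (pcharf0P K) char0) p1 orbF.
by move/eqP.
Qed.

End Odd.
End Step.

Section OddDimension.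
Hypotheses (char0 : [pchar K] =i pred0) (n_odd : odd n).

Lemma vergne m : vergne_at m.
Proof.
elim: m => [|m IH]; first exact: vergne_at_le3.
have [m3|m_ge4] := leqP m.+1 3; first exact: vergne_at_le3.
have [nm|m_lt_n] := leqP n m.+1; first exact: vergne_at_ge.
have vergne3 := vergne_at_le3 (leqnn 3).
have [m_odd|m_even] := boolP (odd m.+1); last exact: vergne_at_even.
apply: vergne_at_odd => //.
have : m.+2 != n by apply/eqP => en; move: n_odd m_odd; rewrite -en /= negbK => ->.
lia.
Qed.

Lemma supp_from_c_succ (i j : 'I_n) : supp_from (i + j).+1 (c i j).
Proof.
have supp_e0 (k : 'I_n) : supp_from k.+1 (c e0 k).
  by move=> t tk; rewrite c_e0E; case: eqP; rewrite ?andbF //; lia.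
have [i0|i_gt0] := posnP i.
  have -> : i = e0 by apply: val_inj => /=; lia.
  by rewrite /= add0n; apply: supp_e0.
have [j0|j_gt0] := posnP j; last exact: vergne.
have -> : j = e0 by apply: val_inj => /=; lia.
by rewrite c_anti addn0; apply/supp_fromN/supp_e0.
Qed.

End OddDimension.

End LowerCentralSeries.
End Adapted.
End Lie.
End Filiform.

Section ZeroCorner.
Variables (K : fieldType) (p q : nat).

Lemma mul_pid_mxE r (A : 'M[K]_(p, q)) j i : (pid_mx r *m A) j i = (j < r)%:R * A j i.
Proof.
rewrite mxE (bigD1 j) //= [X in _ + X]big1 ?addr0; first by rewrite mxE eqxx.
move=> k kj; rewrite mxE; case: eqP => [/val_inj jk|]; last by rewrite mul0r.
by move: kj; rewrite jk eqxx.
Qed.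

Lemma mul_mx_pidE r (A : 'M[K]_(p, q)) j i : (A *m pid_mx r) j i = A j i * (i < r)%:R.
Proof.
rewrite mxE (bigD1 i) //= [X in _ + X]big1 ?addr0; first by rewrite mxE eqxx.
move=> k ki; rewrite mxE; case: eqP => [/val_inj ki'|]; last by rewrite mulr0.
by move: ki; rewrite ki' eqxx.
Qed.

Lemma mxrank_zero_corner (A : 'M[K]_(p, q)) a b : (a <= q)%N -> (b <= p)%N ->
  (forall (j : 'I_p) (i : 'I_q), (b <= j)%N -> (a <= i)%N -> A j i = 0) ->
  (\rank A <= a + b)%N.
Proof.
move=> aq bp corner0.
have -> : A = pid_mx b *m A + (A - pid_mx b *m A) by rewrite addrC subrK.
apply: leq_trans (mxrank_add _ _) _; rewrite addnC; apply: leq_add; last first.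
  by apply: leq_trans (mxrankM_maxl _ _) _; rewrite rank_pid_mx.
have -> : A - pid_mx b *m A = (A - pid_mx b *m A) *m pid_mx a.
  apply/matrixP => j i; rewrite mul_mx_pidE.
  have -> : (A - pid_mx b *m A) j i = A j i - (j < b)%:R * A j i.
    by rewrite -mul_pid_mxE !mxE.
  case: (ltnP i a) => ia; first by rewrite mulr1.
  case: (ltnP j b) => jb; first by rewrite mul1r subrr mul0r.
  by rewrite corner0 // mulr0 subrr mul0r.
by apply: leq_trans (mxrankM_maxr _ _) _; rewrite rank_pid_mx.
Qed.

End ZeroCorner.

Section Stabilizer.
Variables (K : fieldType) (n : nat) (c : 'I_n -> 'I_n -> 'rV[K]_n).

Lemma stab_mxE l (j i : 'I_n) : stab_mx c l j i = app l (c i j).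
Proof. by rewrite mxE br_bvec. Qed.

Lemma gsub_bvec i (j : 'I_n) : (i.-1 <= j)%N -> gsub i (bvec K j).
Proof. by move=> le; apply/gsub_supp_from/supp_from_bvec. Qed.

Lemma dim_stab_lower_bound l a b : (a <= n)%N -> (b <= n)%N ->
  (forall i j : 'I_n, (a <= i)%N -> (b <= j)%N -> c i j = 0) ->
  (n - (a + b) <= dim_stab c l)%N.
Proof.
move=> an bn cab0; rewrite /dim_stab mxrank_ker leq_sub2l //.
by apply: mxrank_zero_corner => // j i bj ai; rewrite stab_mxE cab0 // /app mul0mx mxE.
Qed.

Lemma brackets_of_chi1 : chi_eq c 1 -> forall i : nat, (1 <= i <= n - 1)%N ->
  exists x y : 'rV[K]_n, gsub i x /\ gsub (n - i) y /\ br c x y != 0.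
Proof.
move=> [[l dim1] _] i /andP[i_gt0 i_lt].
have [/existsP[a /existsP[b /and3P[ia jb cab]]]|] := boolP
    [exists a : 'I_n, exists b : 'I_n,
       [&& (i.-1 <= a)%N, ((n - i).-1 <= b)%N & c a b != 0]].
  by exists (bvec K a), (bvec K b); rewrite br_bvec; do !split => //; apply: gsub_bvec.
rewrite negb_exists => /forallP cab0.
have := @dim_stab_lower_bound l i.-1 (n - i).-1; rewrite dim1.
suff /[swap]/[apply] : forall a b : 'I_n, (i.-1 <= a)%N -> ((n - i).-1 <= b)%N -> c a b = 0.
  by lia.
move=> a b ia jb; have /existsPn/(_ b) := cab0 a.
by rewrite ia jb negbK => /eqP.
Qed.

Section Graded.
Hypotheses (n_gt0 : (0 < n)%N) (c_graded : forall i j : 'I_n, supp_from (i + j).+1 (c i j)).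

Let tn_lt : (n.-1 < n)%N. Proof. by rewrite ltn_predL. Qed.
Let tn : 'I_n := Ordinal tn_lt.
Let top_coef i j := c i j 0 tn.

Lemma c_graded_eq0 (i j : 'I_n) : (n <= (i + j).+1)%N -> c i j = 0.
Proof. by move=> le; apply: supp_from_eq0 le _; apply: c_graded. Qed.

Lemma dim_stab_gt0 l : (0 < dim_stab c l)%N.
Proof.
have : (bvec K tn <= kermx (stab_mx c l))%MS.
  apply/sub_kermxP; rewrite /bvec -rowE; apply/rowP => i.
  by rewrite !mxE br_bvec c_graded_eq0 ?/app ?mul0mx ?mxE //=; lia.
by rewrite /dim_stab; move/mxrankS; rewrite mxrank_delta.
Qed.

Lemma br_eq0_of_top_coef (a b : 'I_n) : (a + b)%N = (n - 2)%N -> top_coef a b = 0 ->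
  forall x y, supp_from a x -> supp_from b y -> br c x y = 0.
Proof.
move=> ab top0 x y hx hy.
rewrite /br big1 // => i _; rewrite big1 // => j _.
have [ia|ai] := ltnP i a; first by rewrite hx // mul0r scale0r.
have [jb|bj] := ltnP j b; first by rewrite hy // mulr0 scale0r.
have [le|lt] := leqP n (i + j).+1; first by rewrite c_graded_eq0 // scaler0.
have -> : i = a by apply: val_inj => /=; lia.
have -> : j = b by apply: val_inj => /=; lia.
suff -> : c a b = 0 by rewrite scaler0.
apply/rowP => t; rewrite mxE.
have [tl|tl] := ltnP t n.-1; first by apply: c_graded; lia.
have -> : t = tn by apply: val_inj => /=; have := ltn_ord t; lia.
exact: top0.
Qed.

Hypothesis top_coef_neq0 : forall a b : 'I_n, (a + b)%N = (n - 2)%N -> top_coef a b != 0.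

Let l_top : 'cV[K]_n := delta_mx tn 0.

Lemma kernel_stab_top (y : 'rV[K]_n) :
  y *m stab_mx c l_top = 0 -> forall k : 'I_n, (k < n.-1)%N -> y 0 k = 0.
Proof.
move=> yA0 k; have [m] := ubnP k; elim: m k => // m IH k /ltnSE km kn.
have il : (n - 2 - k < n)%N by lia.
have := congr1 (fun v : 'rV[K]_n => v 0 (Ordinal il)) yA0.
rewrite !mxE (bigD1 k) //= [X in _ + X]big1 ?addr0.
  move/eqP; rewrite stab_mxE /app -colE mxE mulf_eq0 => /orP[/eqP //|].
  by rewrite (negbTE (top_coef_neq0 _)) //= addnC; lia.
move=> j jk; have [jk'|kj] := ltnP j k; first by rewrite IH ?mul0r //; lia.
rewrite stab_mxE /app -colE mxE c_graded_eq0 ?mxE ?mulr0 //=.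
by move: jk; rewrite -val_eqE /=; lia.
Qed.

Lemma dim_stab_top : dim_stab c l_top = 1%N.
Proof.
apply/eqP; rewrite eqn_leq dim_stab_gt0 andbT /dim_stab.
suff sub : (kermx (stab_mx c l_top) <= bvec K tn)%MS.
  by have := mxrankS sub; rewrite mxrank_delta.
apply/row_subP => r.
have /kernel_stab_top yk : row r (kermx (stab_mx c l_top)) *m stab_mx c l_top = 0.
  by rewrite -row_mul mulmx_ker row0.
rewrite [row _ _]row_sum_delta (bigD1 tn) //= big1 ?addr0; first exact: scalemx_sub.
move=> k ktn; rewrite yk ?scale0r //.
by move: ktn; rewrite -val_eqE /=; have := ltn_ord k; lia.
Qed.

End Graded.

Lemma chi1_of_brackets : (1 < n)%N ->
  (forall i j : 'I_n, supp_from (i + j).+1 (c i j)) ->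
  (forall i : nat, (1 <= i <= n - 1)%N ->
     exists x y : 'rV[K]_n, gsub i x /\ gsub (n - i) y /\ br c x y != 0) ->
  chi_eq c 1.
Proof.
move=> n_gt1 c_graded brackets; have n_gt0 := ltnW n_gt1.
split; last exact: dim_stab_gt0.
eexists; apply: dim_stab_top => // a b ab.
apply/negP => /eqP top0.
have [x [y [hx [hy]]]] := brackets (n - 1 - b)%N ltac:(lia).
rewrite (br_eq0_of_top_coef c_graded ab top0) ?eqxx //.
  by move/gsub_supp_from: hx; apply: supp_fromW; lia.
by move/gsub_supp_from: hy; apply: supp_fromW; lia.
Qed.

End Stabilizer.

Theorem theorem6p3 (K : fieldType) (n : nat)
    (c : 'I_n -> 'I_n -> 'rV[K]_n) :
  [pchar K] =i pred0 ->
  odd n -> (3 <= n)%N ->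
  filiform c -> adapted c ->
  chi_eq c 1 <->
  (forall i : nat, (1 <= i <= n - 1)%N ->
     exists x y : 'rV[K]_n, gsub i x /\ gsub (n - i) y /\ br c x y != 0).
Proof.
move=> char0 n_odd n_ge3 [c_lie [_ lcs_dim]] c_adapted.
split; first exact: brackets_of_chi1.
by apply: chi1_of_brackets; [lia | exact: supp_from_c_succ].
Qed.
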